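(* Let $N_1=(S_1,A,L_1,AP,V_1,\{s_0^1\})$ and $N_2=(S_2,A,L_2,AP,V_2,\{s_0^2\})$ be deterministic APAs in SVNF with $N_1\not\preceq N_2$, and let $P$ be the counterexample PA constructed in the context. Then $P\models N_1$ and $P\not\models N_2$.
   Context: For a finite set $S$, $\mathrm{Dist}(S)$ is the set of probability distributions on $S$; $C(S)$ is a set of constraints, each $\phi\in C(S)$ determining $Sat(\phi)\subseteq\mathrm{Dist}(S)$. An APA is a tuple $N=(S,A,L,AP,V,S_0)$ with finite state set $S$, initial states $S_0\subseteq S$, finite action set $A$, finite set $AP$ of atomic propositions, $L:S\times A\times C(S)\to\{\top,?,\bot\}$ ($\top$: must, $?$: may, $\bot$: no transition) and $V:S\to 2^{2^{AP}}$. A PA $P=(S,A,L,AP,V,s_0)$ has one initial state, $L:S\times A\times\mathrm{Dist}(S)\to\{\top,\bot\}$, $V:S\to 2^{AP}$; it is regarded as an APA with valuation sets $\{V(s)\}$ and each distribution $\mu$ as a constraint with $Sat(\mu)=\{\mu\}$. An APA is in SVNF if $|V(s)|\le1$ for all $s$; it is deterministic if it has exactly one initial state, for all $s,a$ at most one $\phi$ has $L(s,a,\phi)\ne\bot$, and for all $s,a,\phi$ with $L(s,a,\phi)\ne\bot$ and distinct states $s',s''$ with $V(s')\cap V(s'')\ne\emptyset$ there are no $\mu,\mu'\in Sat(\phi)$ with $\mu(s')>0$ and $\mu'(s'')>0$. For $\mu\in\mathrm{Dist}(S)$, $\mu'\in\mathrm{Dist}(S')$, $\mathcal Q\subseteq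 S\times S'$, $\mu\Subset_{\mathcal Q}\mu'$ means there is $\delta:S\to(S'\to[0,1])$ with $\delta(s)$ a distribution whenever $\mu(s)>0$, $\sum_s\mu(s)\delta(s)(s')=\mu'(s')$ for all $s'$, and $\delta(s)(s')>0\Rightarrow(s,s')\in\mathcal Q$. For APAs $M_1,M_2$ and $\mathcal Q$ a relation between their states, a pair $(s_1,s_2)$ satisfies the refinement conditions w.r.t. $\mathcal Q$ if: $V_1(s_1)\subseteq V_2(s_2)$; whenever $L_2(s_2,a,\phi_2)=\top$ there is $\phi_1$ with $L_1(s_1,a,\phi_1)=\top$ and every $\mu_1\in Sat(\phi_1)$ has some $\mu_2\in Sat(\phi_2)$ with $\mu_1\Subset_{\mathcal Q}\mu_2$; whenever $L_1(s_1,a,\phi_1)\ne\bot$ there is $\phi_2$ with $L_2(s_2,a,\phi_2)\ne\bot$ and every $\mu_1\in Sat(\phi_1)$ has some $\mu_2\in Sat(\phi_2)$ with $\mu_1\Subset_{\mathcal Q}\mu_2$. A refinement relation is a $\mathcal Q$ all of whose pairs satisfy these conditions w.r.t. $\mathcal Q$; $M_1\preceq M_2$ if some refinement relation relates each initial state of $M_1$ to some initial state of $M_2$; for a PA $P$, $P\models N$ means $P\preceq N$. For $N$ in SVNF, $\mathsf{succ}_{s,a}(v)=\{s'\mid V(s')=\{v\},\ \exists\phi\,\exists\mu\in Sat(\phi):L(s,a,\phi)\ne\bot,\mu(s')>0\}$; for deterministic $N$ this has at most one element, identified with that element (or $\emptyset$); for $s_1'\in S_1$ with $V_1(s_1')=\{v\}$,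 $\mathsf{succ}_{s_2,e}(s_1'):=\mathsf{succ}_{s_2,e}(v)$ computed in $N_2$. Maximal relation and index: $\mathcal R$ is the maximal refinement relation between $N_1$ and $N_2$ (union of all refinement relations). $\mathcal R_0=S_1\times S_2$; $\mathcal R_{k+1}$ is the set of pairs of $\mathcal R_k$ satisfying the refinement conditions w.r.t. $\mathcal R_k$; $\mathrm{ind}(\mathcal R)=K$ is the least index with $\mathcal R_K=\mathcal R_{K+1}$ (then $\mathcal R_K=\mathcal R$); $\mathrm{ind}_{\mathcal R}(s_1,s_2)=\min(\max\{k\mid(s_1,s_2)\in\mathcal R_k\},K)$. Cases: $(s_1,s_2)\in S_1\times S_2$ is in case 1 if $(s_1,s_2)\in\mathcal R$, case 2 if $V_1(s_1)\ne V_2(s_2)$, case 3 if $(s_1,s_2)\notin\mathcal R$ and $V_1(s_1)=V_2(s_2)$. For $(s_1,s_2)$ in case 3 and $e\in A$: $e\in B_a(s_1,s_2)$ iff some $\phi_1$ has $L_1(s_1,e,\phi_1)=\top$ and $L_2(s_2,e,\cdot)\equiv\bot$; $e\in B_b$ iff some $\phi_1$ has $L_1(s_1,e,\phi_1)=?$ and $L_2(s_2,e,\cdot)\equiv\bot$; $e\in B_c$ iff some $\phi_1$ has $L_1(s_1,e,\phi_1)\in\{?,\top\}$, some $\phi_2$ has $L_2(s_2,e,\phi_2)=?$, and some $\mu\in Sat(\phi_1)$ has $\mu\not\Subset_{\mathcal R}\mu'$ for all $\mu'\in Sat(\phi_2)$; $e\in B_d$ iff some $\phi_2$ has $L_2(s_2,e,\phi_2)=\top$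 and $L_1(s_1,e,\cdot)\equiv\bot$; $e\in B_e$ iff some $\phi_2$ has $L_2(s_2,e,\phi_2)=\top$ and some $\phi_1$ has $L_1(s_1,e,\phi_1)=?$; $e\in B_f$ iff some $\phi_2$ has $L_2(s_2,e,\phi_2)=\top$, some $\phi_1$ has $L_1(s_1,e,\phi_1)=\top$, and some $\mu\in Sat(\phi_1)$ has $\mu\not\Subset_{\mathcal R}\mu'$ for all $\mu'\in Sat(\phi_2)$. $B(s_1,s_2)$ is the union of these six (pairwise disjoint) sets. $\mathrm{Breaking}(s_1,s_2)$ (for $V_1(s_1)=V_2(s_2)$, $\mathrm{ind}_{\mathcal R}(s_1,s_2)=k<\mathrm{ind}(\mathcal R)$) is the set of $a\in A$ with $a\in B_a\cup B_b\cup B_d\cup B_e$ (at $(s_1,s_2)$), or such that there exist $\phi_1,\phi_2$, $\mu_1\in Sat(\phi_1)$ with $L_1(s_1,a,\phi_1)\ne\bot$, $L_2(s_2,a,\phi_2)\ne\bot$ and $\mu_1\not\Subset_{\mathcal R_k}\mu_2$ for all $\mu_2\in Sat(\phi_2)$. Construction of $P=(S,A,L,AP,V,s_0)$: $S=S_1\times(S_2\cup\{\bot\})$, $s_0=(s_0^1,s_0^2)$, $V(s_1,s_2)=v$ where $V_1(s_1)=\{v\}$. For $\mu_1\in\mathrm{Dist}(S_1)$ let $\mu_1^\bot\in\mathrm{Dist}(S)$ be $\mu_1^\bot(s_1',s_2')=\mu_1(s_1')$ if $s_2'=\bot$ and $0$ otherwise. For $(s_1,s_2)$, $e$, and $\mu_1\in\mathrm{Dist}(S_1)$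 let $\widehat{\mu_1}\in\mathrm{Dist}(S)$ be $\widehat{\mu_1}(s_1',s_2')=\mu_1(s_1')$ if $s_2'=\mathsf{succ}_{s_2,e}(s_1')$, or if $\mathsf{succ}_{s_2,e}(s_1')=\emptyset$ and $s_2'=\bot$; and $0$ otherwise. Transitions of $(s_1,s_2)$: if $(s_1,s_2)$ is in case 1 or 2 or $s_2=\bot$, then for every $a$ and $\phi_1$ with $L_1(s_1,a,\phi_1)=\top$, choose an arbitrary $\mu_1\in Sat(\phi_1)$ and set $L((s_1,s_2),a,\mu_1^\bot)=\top$. Otherwise $(s_1,s_2)$ is in case 3: for every $a\notin B(s_1,s_2)$ and $\phi_1$ with $L_1(s_1,a,\phi_1)=\top$, choose an arbitrary $\mu_1\in Sat(\phi_1)$ and set $L((s_1,s_2),a,\mu_1^\bot)=\top$; and for $e\in B(s_1,s_2)$: if $e\in B_a\cup B_b$, take $\phi_1$ with $L_1(s_1,e,\phi_1)\ne\bot$, an arbitrary $\mu_1\in Sat(\phi_1)$, and set $L((s_1,s_2),e,\mu_1^\bot)=\top$; if $e\in B_d\cup B_e$, $P$ has no $e$-transition from $(s_1,s_2)$; if $e\in B_c\cup B_f$, take the unique $\phi_1,\phi_2$ with $L_1(s_1,e,\phi_1)\ne\bot$, $L_2(s_2,e,\phi_2)\ne\bot$, and if $e\in\mathrm{Breaking}(s_1,s_2)$ let $\mu_1\in Sat(\phi_1)$ be a distribution such that (i) some $s_1'$ with $\mu_1(s_1')>0$ has $\mathsf{succ}_{s_2,e}(s_1')=\emptyset$, or (ii)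 $s_2'\mapsto\sum_{\{s_1'\mid s_2'=\mathsf{succ}_{s_2,e}(s_1')\}}\mu_1(s_1')$ is not in $Sat(\phi_2)$, or (iii) some $s_1',s_2'$ with $\mu_1(s_1')>0$, $s_2'=\mathsf{succ}_{s_2,e}(s_1')$ have $\mathrm{ind}_{\mathcal R}(s_1',s_2')<\mathrm{ind}_{\mathcal R}(s_1,s_2)$ (such a $\mu_1$ exists); otherwise let $\mu_1$ be an arbitrary distribution in $Sat(\phi_1)$ with $\mu_1\not\Subset_{\mathcal R}\mu_2$ for all $\mu_2\in Sat(\phi_2)$; in both cases set $L((s_1,s_2),e,\widehat{\mu_1})=\top$. All other values of $L$ are $\bot$. *)

From HB Require Import structures.
From mathcomp Require Import all_boot all_order all_algebra.
From mathcomp Require Import boolp reals.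
From mathcomp Require classical_sets.

Set Implicit Arguments.
Unset Strict Implicit.
Unset Printing Implicit Defensive.

Import Order.TTheory GRing.Theory Num.Theory.

(* Transition modalities: Must = ⊤, May = ?, No = ⊥. *)
Inductive tval := Must | May | No.

Section APAs.
Context (R : realType) (A AP : finType).
Local Open Scope ring_scope.

Definition is_dist (S : finType) (mu : S -> R) : Prop :=
  (forall s, 0 <= mu s) /\ \sum_(s : S) mu s = 1.

(* An APA over state set S (finite) and constraint set C(S) = C,
   each constraint phi determining Sat phi ⊆ Dist(S) (see [APA_wf]). *)
Record APA (S : finType) (C : Type) := mkAPA {
  Sat  : C -> (S -> R) -> Prop;
  L    : S -> A -> C -> tval;
  V    : S -> {set {set AP}};
  init : {set S}
}.

Definition APA_wf S C (N : APA S C) : Prop :=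
  forall phi mu, Sat N phi mu -> is_dist mu.

Record PA (S : finType) := mkPA {
  pL  : S -> A -> (S -> R) -> Prop;   (* true = ⊤, false = ⊥ *)
  pV  : S -> {set AP};
  ps0 : S
}.

Definition APA_of_PA S (P : PA S) : APA S (S -> R) :=
  @mkAPA S (S -> R) (fun mu nu => nu = mu)
    (fun s a mu => if `[< pL P s a mu >] then Must else No)
    (fun s => [set pV P s]) [set ps0 P].

Definition lift_rel (S S' : finType) (Q : S -> S' -> Prop)
    (mu : S -> R) (mu' : S' -> R) : Prop :=
  exists delta : S -> S' -> R,
    (forall s s', 0 <= delta s s' <= 1) /\
    (forall s, 0 < mu s -> is_dist (delta s)) /\
    (forall s', \sum_(s : S) mu s * delta s s' = mu' s') /\
    (forall s s', 0 < delta s s' -> Q s s').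

Section Refinement.
Context (S1 S2 : finType) (C1 C2 : Type) (M1 : APA S1 C1) (M2 : APA S2 C2).

Definition ref_cond (Q : S1 -> S2 -> Prop) (s1 : S1) (s2 : S2) : Prop :=
  [/\ V M1 s1 \subset V M2 s2,
      (forall a phi2, L M2 s2 a phi2 = Must ->
         exists phi1, L M1 s1 a phi1 = Must /\
           forall mu1, Sat M1 phi1 mu1 ->
             exists mu2, Sat M2 phi2 mu2 /\ lift_rel Q mu1 mu2) &
      (forall a phi1, L M1 s1 a phi1 <> No ->
         exists phi2, L M2 s2 a phi2 <> No /\
           forall mu1, Sat M1 phi1 mu1 ->
             exists mu2, Sat M2 phi2 mu2 /\ lift_rel Q mu1 mu2)].

Definition is_refinement (Q : S1 -> S2 -> Prop) : Prop :=
  forall s1 s2, Q s1 s2 -> ref_cond Q s1 s2.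

Definition refines : Prop :=
  exists Q, is_refinement Q /\
    forall s1, s1 \in init M1 -> exists2 s2, s2 \in init M2 & Q s1 s2.

Definition Rmax (s1 : S1) (s2 : S2) : Prop :=
  exists Q, is_refinement Q /\ Q s1 s2.

Fixpoint Rk (k : nat) : S1 -> S2 -> Prop :=
  match k with
  | 0 => fun _ _ => True
  | k'.+1 => fun s1 s2 => Rk k' s1 s2 /\ ref_cond (Rk k') s1 s2
  end.

Definition Rk_stable (K : nat) : Prop :=
  forall s1 s2, Rk K s1 s2 <-> Rk K.+1 s1 s2.

Definition indR : nat :=
  classical_sets.xget 0%N (fun K => Rk_stable K /\ forall k, Rk_stable k -> (K <= k)%N).

(* ind_R(s1,s2) = min(max{k | (s1,s2) in R_k}, K); when the max does not
   exist (the pair is in every R_k) this is K. *)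
Definition indpair (s1 : S1) (s2 : S2) : nat :=
  minn (classical_sets.xget indR
          (fun m => Rk m s1 s2 /\ forall k, Rk k s1 s2 -> (k <= m)%N))
       indR.

End Refinement.

Definition satisfies S (P : PA S) S' C' (N : APA S' C') : Prop :=
  refines (APA_of_PA P) N.

Definition SVNF S C (N : APA S C) : Prop := forall s, (#|V N s| <= 1)%N.

Definition deterministic S C (N : APA S C) : Prop :=
  [/\ #|init N| = 1%N,
      (forall s a phi phi', L N s a phi <> No -> L N s a phi' <> No ->
          phi = phi') &
      (forall s a phi s' s'', L N s a phi <> No -> s' <> s'' ->
          V N s' :&: V N s'' != set0 ->
          ~ exists mu mu', [/\ Sat N phi mu, Sat N phi mu',
                               0 < mu s' & 0 < mu' s''])].

Section Construction.
Context (S1 S2 : finType) (C1 C2 : Type) (N1 : APA S1 C1) (N2 : APA S2 C2).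

Definition RR := Rmax N1 N2.
Definition RRk := Rk N1 N2.
Definition ind_pair := indpair N1 N2.
Definition ind_R := indR N1 N2.

Definition case1 s1 s2 := RR s1 s2.
Definition case2 s1 s2 := V N1 s1 <> V N2 s2.
Definition case3 s1 s2 := ~ RR s1 s2 /\ V N1 s1 = V N2 s2.

Definition no_match (Q : S1 -> S2 -> Prop) (mu : S1 -> R) (phi2 : C2) :=
  forall mu', Sat N2 phi2 mu' -> ~ lift_rel Q mu mu'.

Definition Ba s1 s2 e := (exists phi1, L N1 s1 e phi1 = Must) /\
                         (forall phi2, L N2 s2 e phi2 = No).
Definition Bb s1 s2 e := (exists phi1, L N1 s1 e phi1 = May) /\
                         (forall phi2, L N2 s2 e phi2 = No).
Definition Bc s1 s2 e := exists phi1 phi2,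
  [/\ L N1 s1 e phi1 <> No, L N2 s2 e phi2 = May &
      exists2 mu, Sat N1 phi1 mu & no_match RR mu phi2].
Definition Bd s1 s2 e := (exists phi2, L N2 s2 e phi2 = Must) /\
                         (forall phi1, L N1 s1 e phi1 = No).
Definition Be s1 s2 e := (exists phi2, L N2 s2 e phi2 = Must) /\
                         (exists phi1, L N1 s1 e phi1 = May).
Definition Bf s1 s2 e := exists phi1 phi2,
  [/\ L N2 s2 e phi2 = Must, L N1 s1 e phi1 = Must &
      exists2 mu, Sat N1 phi1 mu & no_match RR mu phi2].
Definition inB s1 s2 e :=
  Ba s1 s2 e \/ Bb s1 s2 e \/ Bc s1 s2 e \/ Bd s1 s2 e \/ Be s1 s2 e \/ Bf s1 s2 e.

Definition Breaking s1 s2 e :=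
  (Ba s1 s2 e \/ Bb s1 s2 e \/ Bd s1 s2 e \/ Be s1 s2 e) \/
  exists phi1 phi2 mu1,
    [/\ L N1 s1 e phi1 <> No, L N2 s2 e phi2 <> No, Sat N1 phi1 mu1 &
        no_match (RRk (ind_pair s1 s2)) mu1 phi2].

(* succ_{s2,e}(s1') := succ_{s2,e}(v) computed in N2, where V1(s1') = {v};
   None encodes the empty set. *)
Definition succ_rel (s2 : S2) (e : A) (s1' : S1) (s2' : S2) : Prop :=
  V N2 s2' = V N1 s1' /\
  exists phi mu, [/\ L N2 s2 e phi <> No, Sat N2 phi mu & 0 < mu s2'].
Definition succ (s2 : S2) (e : A) (s1' : S1) : option S2 :=
  [pick s2' | `[< succ_rel s2 e s1' s2' >] ].

Definition Pst := (S1 * option S2)%type.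

Definition dist_bot (mu1 : S1 -> R) : Pst -> R :=
  fun s => if s.2 is None then mu1 s.1 else 0.

Definition dist_hat (s2 : S2) (e : A) (mu1 : S1 -> R) : Pst -> R :=
  fun s => if s.2 == succ s2 e s.1 then mu1 s.1 else 0.

Definition push (s2 : S2) (e : A) (mu1 : S1 -> R) : S2 -> R :=
  fun s2' => \sum_(s1' : S1 | succ s2 e s1' == Some s2') mu1 s1'.

(* conditions (i), (ii), (iii) of the construction *)
Definition breaking_choice (s1 : S1) (s2 : S2) (e : A) (phi2 : C2)
    (mu1 : S1 -> R) : Prop :=
  (exists s1', 0 < mu1 s1' /\ succ s2 e s1' = None) \/
  ~ Sat N2 phi2 (push s2 e mu1) \/
  (exists s1' s2', [/\ 0 < mu1 s1', succ s2 e s1' = Some s2' &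
                       (ind_pair s1' s2' < ind_pair s1 s2)%N]).

Definition standard (s : Pst) (a : A) : Prop :=
  match s with
  | (_, None) => True
  | (s1, Some s2) => case1 s1 s2 \/ case2 s1 s2 \/ (case3 s1 s2 /\ ~ inB s1 s2 a)
  end.

Definition chooser := Pst -> A -> C1 -> (S1 -> R).

(* the "arbitrary choices" are given by ch; [used s a phi1] says that
   ch s a phi1 is used by the construction *)
Definition used (s : Pst) (a : A) (phi1 : C1) : Prop :=
  (standard s a /\ L N1 s.1 a phi1 = Must) \/
  (exists s2, [/\ s.2 = Some s2, case3 s.1 s2,
     Ba s.1 s2 a \/ Bb s.1 s2 a \/ Bc s.1 s2 a \/ Bf s.1 s2 a &
     L N1 s.1 a phi1 <> No]).

Definition valid_chooser (ch : chooser) : Prop :=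
  (forall s a phi1, used s a phi1 -> Sat N1 phi1 (ch s a phi1)) /\
  (forall s1 s2 a phi1 phi2,
     case3 s1 s2 -> Bc s1 s2 a \/ Bf s1 s2 a ->
     L N1 s1 a phi1 <> No -> L N2 s2 a phi2 <> No ->
     (Breaking s1 s2 a ->
        breaking_choice s1 s2 a phi2 (ch (s1, Some s2) a phi1)) /\
     (~ Breaking s1 s2 a -> no_match RR (ch (s1, Some s2) a phi1) phi2)).

Definition cex_L (ch : chooser) (s : Pst) (a : A) (mu : Pst -> R) : Prop :=
  (standard s a /\
     exists phi1, L N1 s.1 a phi1 = Must /\ mu = dist_bot (ch s a phi1)) \/
  (exists s2, [/\ s.2 = Some s2, case3 s.1 s2, Ba s.1 s2 a \/ Bb s.1 s2 a &
     exists phi1, L N1 s.1 a phi1 <> No /\ mu = dist_bot (ch s a phi1)]) \/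
  (exists s2, [/\ s.2 = Some s2, case3 s.1 s2, Bc s.1 s2 a \/ Bf s.1 s2 a &
     exists phi1, L N1 s.1 a phi1 <> No /\ mu = dist_hat s2 a (ch s a phi1)]).
(* (for a in B_d ∪ B_e there is no transition: none of the disjuncts apply) *)

Definition cex_V (s : Pst) : {set AP} := odflt set0 [pick v in V N1 s.1].

Definition cexPA (s01 : S1) (s02 : S2) (ch : chooser) : PA Pst :=
  @mkPA Pst (cex_L ch) cex_V (s01, Some s02).

End Construction.
End APAs.

(* The projection on S1 refines P into N1.  For P against N2, suppose a
   refinement Q relates ((s1, s2), s2) for a pair (s1, s2) in case 3 (the initial
   pair is one, as N1 does not refine N2), with ind_R(s1, s2) = k minimal.  The
   pair drops out of R_{k+1}, so some action a is breaking at it.  A breaking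
   action always gives P an a-transition at (s1, s2): copied from N1, or forced
   through Q by a must-transition of N2.  Yet no such transition is matched in
   N2: in cases B_a, B_b N2 has no a-transition at all, and for a hatted
   distribution determinism of N2 makes every matching coupling follow succ, so
   each of the conditions (i)-(iii) on the chosen mu1 is contradicted, (iii) by
   the minimality of k. *)
From HB Require Import structures.
From mathcomp Require Import all_boot all_order all_algebra.
From mathcomp Require Import boolp reals.
From mathcomp Require classical_sets.
From mathcomp Require Import lra.

Set Implicit Arguments.
Unset Strict Implicit.
Unset Printing Implicit Defensive.
Import Order.TTheory GRing.Theory Num.Theory.
Local Open Scope ring_scope.

Section Distributions.
Context (R : realType).

Lemma dist_support (S : finType) (f : S -> R) : is_dist f -> exists t, 0 < f t.
Proof.
case=> f0 f1; apply: contrapT => nt.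
move: f1; rewrite big1 => [/eqP|t _]; first by rewrite eq_sym oner_eq0.
by apply/eqP; rewrite eq_le f0 andbT leNgt; apply/negP => ft; apply: nt; exists t.
Qed.

Lemma dist_point (S : finType) (f : S -> R) t0 :
  is_dist f -> (forall t, 0 < f t -> t = t0) -> forall t, f t = (t == t0)%:R.
Proof.
move=> [f0 f1] supp.
have fz t : t != t0 -> f t = 0.
  move=> nt; apply/eqP; rewrite eq_le f0 andbT leNgt.
  by apply/negP => /supp E; rewrite E eqxx in nt.
move=> t; case: eqVneq => [->|/fz -> //].
by rewrite -f1 (bigD1 t0) //= big1 ?addr0 // => t' /fz.
Qed.

Lemma lift_rel_mono (S S' : finType) (Q Q' : S -> S' -> Prop) (mu : S -> R) mu' :
  (forall x y, Q x y -> Q' x y) -> lift_rel Q mu mu' -> lift_rel Q' mu mu'.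
Proof.
move=> QQ' [d [d01 [ddist [dsum dQ]]]]; exists d; do 3!split=> //.
by move=> s s' /dQ /QQ'.
Qed.

Lemma lift_rel_fst (S T : finType) (nu : S * T -> R) (mu : S -> R) :
  (forall s, \sum_t nu (s, t) = mu s) -> lift_rel (fun p s => p.1 = s) nu mu.
Proof.
move=> marg; exists (fun p s => (p.1 == s)%:R); split; [|split; [|split]].
- by move=> p s; case: (p.1 == s); rewrite ?ler01 ?lexx.
- move=> p _; split; first by move=> s; case: (p.1 == s).
  by rewrite (bigD1 p.1) //= eqxx big1 ?addr0 // => s /negbTE; rewrite eq_sym => ->.
- move=> s'; rewrite -marg.
  transitivity (\sum_s \sum_t nu (s, t) * (s == s')%:R).
    by rewrite pair_bigA; apply: eq_bigr => -[].
  rewrite (bigD1 s') //= [X in _ + X]big1 ?addr0.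
    by apply: eq_bigr => t _; rewrite eqxx mulr1.
  by move=> s /negbTE ->; apply: big1 => t _; rewrite mulr0.
- by move=> p s; case: eqP => // _; rewrite ltxx.
Qed.

End Distributions.

Section RefinementTheory.
Context (R : realType) (A AP : finType) (S1 S2 : finType) (C1 C2 : Type)
  (M1 : APA R A AP S1 C1) (M2 : APA R A AP S2 C2).

Lemma ref_cond_mono (Q Q' : S1 -> S2 -> Prop) s1 s2 :
  (forall x y, Q x y -> Q' x y) -> ref_cond M1 M2 Q s1 s2 -> ref_cond M1 M2 Q' s1 s2.
Proof.
move=> QQ' [hV hMust hMay]; split=> //.
- move=> a phi2 /hMust [phi1 [h1 h2]]; exists phi1; split=> // mu1 /h2 [mu2 [h3 h4]].
  by exists mu2; split=> //; apply: lift_rel_mono h4.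
- move=> a phi1 /hMay [phi2 [h1 h2]]; exists phi2; split=> // mu1 /h2 [mu2 [h3 h4]].
  by exists mu2; split=> //; apply: lift_rel_mono h4.
Qed.

Lemma Rmax_refinement : is_refinement M1 M2 (Rmax M1 M2).
Proof.
move=> s1 s2 [Q [HQ q]]; apply: ref_cond_mono (HQ _ _ q).
by move=> x y qxy; exists Q.
Qed.

Lemma Rmax_Rk k s1 s2 : Rmax M1 M2 s1 s2 -> Rk M1 M2 k s1 s2.
Proof.
move=> [Q [HQ q]]; elim: k s1 s2 q => [//|k IH] s1 s2 q /=.
by split; [exact: IH | apply: ref_cond_mono (HQ _ _ q) => x y /IH].
Qed.

Lemma Rk_antimono k l s1 s2 : (k <= l)%N -> Rk M1 M2 l s1 s2 -> Rk M1 M2 k s1 s2.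
Proof.
elim: l => [|l IH]; first by rewrite leqn0 => /eqP ->.
by rewrite leq_eqVlt => /orP [/eqP -> //|]; rewrite ltnS => kl [/(IH kl)].
Qed.

(* The R_k form a decreasing chain of subsets of the finite set S1 * S2. *)
Lemma Rk_stabilizes : exists K, Rk_stable M1 M2 K.
Proof.
apply/not_existsP => unstable.
pose cnt k := #|[set p : S1 * S2 | `[< Rk M1 M2 k p.1 p.2 >]]|.
have cnt_decr k : (cnt k.+1 < cnt k)%N.
  apply: proper_card; rewrite properEneq; apply/andP; split.
  - apply/eqP => E; apply: (unstable k) => s1 s2; split; last by case.
    move=> h; have : (s1, s2) \in [set p : S1 * S2 | `[< Rk M1 M2 k p.1 p.2 >]].
      by rewrite inE; apply/asboolP.
    by rewrite -E inE => /asboolP.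
  - by apply/subsetP => p; rewrite !inE => /asboolP [h _]; apply/asboolP.
have cnt_bound k : (cnt k + k <= cnt 0)%N.
  elim: k => [|k IH]; first by rewrite addn0.
  by apply: leq_trans IH; rewrite addnS ltn_add2r.
by have := cnt_bound (cnt 0).+1; rewrite addnS ltnNge leq_addl.
Qed.

Lemma indR_stable : Rk_stable M1 M2 (indR M1 M2).
Proof.
have [K HK] := Rk_stabilizes.
have exP : exists n, `[< Rk_stable M1 M2 n >] by exists K; apply/asboolP.
case: (ex_minnP exP) => m /asboolP Hm Hmin.
have [] // := classical_sets.xgetPex 0%N (P := fun K => Rk_stable M1 M2 K /\
  forall k, Rk_stable M1 M2 k -> (K <= k)%N).
by exists m; split=> // k hk; apply: Hmin; apply/asboolP.
Qed.

Lemma Rk_indR_Rmax s1 s2 : Rk M1 M2 (indR M1 M2) s1 s2 -> Rmax M1 M2 s1 s2.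
Proof.
move=> h; exists (Rk M1 M2 (indR M1 M2)); split=> //.
by move=> x y /indR_stable [].
Qed.

Lemma indpair_Rmax s1 s2 : Rmax M1 M2 s1 s2 -> indpair M1 M2 s1 s2 = indR M1 M2.
Proof.
move=> h; rewrite /indpair classical_sets.xgetPN ?minnn //.
by move=> m [_ /(_ m.+1 (Rmax_Rk _ h))]; rewrite ltnn.
Qed.

Lemma indpair_notRmax s1 s2 : ~ Rmax M1 M2 s1 s2 ->
  [/\ Rk M1 M2 (indpair M1 M2 s1 s2) s1 s2,
      ~ Rk M1 M2 (indpair M1 M2 s1 s2).+1 s1 s2 &
      (indpair M1 M2 s1 s2 < indR M1 M2)%N].
Proof.
move=> nR; have nK : ~ Rk M1 M2 (indR M1 M2) s1 s2 by move/Rk_indR_Rmax.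
have exP : exists n, `[< Rk M1 M2 n s1 s2 >] by exists 0%N; apply/asboolP.
have ubP n : `[< Rk M1 M2 n s1 s2 >] -> (n <= indR M1 M2)%N.
  move=> /asboolP h; rewrite leqNgt; apply/negP => lt.
  by apply: nK; apply: Rk_antimono h; apply: ltnW.
case: (ex_maxnP exP ubP) => m /asboolP Hm Hmax.
pose P m := Rk M1 M2 m s1 s2 /\ forall k, Rk M1 M2 k s1 s2 -> (k <= m)%N.
have [] : P (classical_sets.xget (indR M1 M2) P).
  by apply: classical_sets.xgetPex; exists m; split=> // k hk; apply/Hmax/asboolP.
set x := classical_sets.xget _ _ => hx hxm.
have xK : (x < indR M1 M2)%N.
  by rewrite ltnNge; apply/negP => le; apply: nK; apply: Rk_antimono hx.
have -> : indpair M1 M2 s1 s2 = x by apply/minn_idPl; apply: ltnW.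
by split=> // /hxm; rewrite ltnn.
Qed.

End RefinementTheory.

Section BreakingActions.
Context (R : realType) (A AP : finType) (S1 S2 : finType) (C1 C2 : Type)
  (N1 : APA R A AP S1 C1) (N2 : APA R A AP S2 C2).

Lemma no_match_Rk_RR k mu phi2 :
  no_match N2 (RRk N1 N2 k) mu phi2 -> no_match N2 (RR N1 N2) mu phi2.
Proof.
move=> nm mu' sat l; apply: (nm mu' sat); apply: lift_rel_mono l.
by move=> x y; apply: Rmax_Rk.
Qed.

Lemma no_match_witness (phi1 : C1) (phi2 : C2) (Q : S1 -> S2 -> Prop) :
  ~ (forall mu1, Sat N1 phi1 mu1 ->
       exists mu2, Sat N2 phi2 mu2 /\ lift_rel Q mu1 mu2) ->
  exists2 mu1, Sat N1 phi1 mu1 & no_match N2 Q mu1 phi2.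
Proof.
move=> h; apply: contrapT => h2; apply: h => mu1 s1; apply: contrapT => h3.
by apply: h2; exists mu1 => // mu2 s2 l; apply: h3; exists mu2.
Qed.

Lemma Breaking_inB s1 s2 a : Breaking N1 N2 s1 s2 a -> inB N1 N2 s1 s2 a.
Proof.
rewrite /inB; case=> [|[phi1 [phi2 [mu1 [H1 H2 Sat1 /no_match_Rk_RR nm]]]]]; first tauto.
case E2: (L N2 s2 a phi2) H2 => // _.
- case E1: (L N1 s1 a phi1) H1 => // _.
  + by do 5!right; exists phi1, phi2; split=> //; exists mu1.
  + by do 4!right; left; split; [exists phi2 | exists phi1].
- by do 2!right; left; exists phi1, phi2; split=> //; exists mu1.
Qed.

Lemma ref_cond_not_Breaking s1 s2 :
  V N1 s1 = V N2 s2 -> (forall a, ~ Breaking N1 N2 s1 s2 a) ->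
  ref_cond N1 N2 (RRk N1 N2 (ind_pair N1 N2 s1 s2)) s1 s2.
Proof.
move=> eqV nB; split; first by rewrite eqV.
- move=> a phi2 H2; apply: contrapT => nMust; apply: (nB a).
  have [[phi1 H1]|noMust] := EM (exists phi1, L N1 s1 a phi1 = Must).
    have [mu1 Sat1 nm] := no_match_witness (phi1 := phi1) (phi2 := phi2)
      (Q := RRk N1 N2 (ind_pair N1 N2 s1 s2)) (fun h => nMust (ex_intro _ phi1 (conj H1 h))).
    by right; exists phi1, phi2, mu1; rewrite H1 H2.
  have [[phi1 H1]|noMay] := EM (exists phi1, L N1 s1 a phi1 = May).
    by left; do 3!right; split; [exists phi2 | exists phi1].
  left; do 2!right; left; split; first by exists phi2.
  move=> phi1; case E: (L N1 s1 a phi1) => //.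
  + by case: noMust; exists phi1.
  + by case: noMay; exists phi1.
- move=> a phi1 H1; apply: contrapT => nMay; apply: (nB a).
  have [[phi2 H2]|noTr] := EM (exists phi2, L N2 s2 a phi2 <> No).
    have [mu1 Sat1 nm] := no_match_witness (phi1 := phi1) (phi2 := phi2)
      (Q := RRk N1 N2 (ind_pair N1 N2 s1 s2)) (fun h => nMay (ex_intro _ phi2 (conj H2 h))).
    by right; exists phi1, phi2, mu1.
  have No2 phi2 : L N2 s2 a phi2 = No by apply: contrapT => h; apply: noTr; exists phi2.
  case E1: (L N1 s1 a phi1) H1 => // _.
  + by left; left; split=> //; exists phi1.
  + by left; right; left; split=> //; exists phi1.
Qed.

Lemma case3_Breaking s1 s2 : case3 N1 N2 s1 s2 -> exists a, Breaking N1 N2 s1 s2 a.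
Proof.
move=> [nR eqV]; have [inRk notRk1 _] := indpair_notRmax nR.
apply: contrapT => nB; apply: notRk1; split=> //.
by apply: ref_cond_not_Breaking => // a Br; apply: nB; exists a.
Qed.

Hypothesis det1 : deterministic N1.

Lemma inB_Must s1 s2 a phi1 : L N1 s1 a phi1 = Must -> inB N1 N2 s1 s2 a ->
  [\/ Ba N1 N2 s1 s2 a, Bb N1 N2 s1 s2 a, Bc N1 N2 s1 s2 a | Bf N1 N2 s1 s2 a].
Proof.
move=> H1; case=> [B|[B|[B|[[_ /(_ phi1)]|[[_ [phi1' H1']]|B]]]]].
- exact: Or41.
- exact: Or42.
- exact: Or43.
- by rewrite H1.
- case: det1 => _ uniqL _.
  have E : phi1 = phi1' by apply: (uniqL s1 a); rewrite ?H1 ?H1'.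
  by rewrite E H1' in H1.
- exact: Or44.
Qed.

End BreakingActions.

Section Counterexample.
Context (R : realType) (A AP : finType) (S1 S2 : finType) (C1 C2 : Type)
  (N1 : APA R A AP S1 C1) (N2 : APA R A AP S2 C2)
  (s01 : S1) (s02 : S2) (ch : chooser R A S1 S2 C1).
Hypothesis (wf1 : APA_wf N1) (sv2 : SVNF N2) (det1 : deterministic N1)
  (det2 : deterministic N2) (V1 : forall s1, #|V N1 s1| = 1)
  (vch : valid_chooser N1 N2 ch).

Local Notation P := (cexPA N1 N2 s01 s02 ch).
Local Notation fstR := (fun (p : Pst S1 S2) (s : S1) => p.1 = s).

Lemma cex_V_spec (p : Pst S1 S2) : V N1 p.1 = [set cex_V N1 p].
Proof.
have /cards1P [v Ev] : #|V N1 p.1| == 1%N by rewrite V1.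
by rewrite /cex_V Ev; case: pickP => [v' /set1P -> | /(_ v)]; rewrite ?set11.
Qed.

Lemma lift_fst_bot (mu : S1 -> R) : lift_rel fstR (dist_bot mu) mu.
Proof. by apply: lift_rel_fst => s1; rewrite (bigD1 None) //= big1 ?addr0 // => -[]. Qed.

Lemma lift_fst_hat s2 a (mu : S1 -> R) : lift_rel fstR (dist_hat N1 N2 s2 a mu) mu.
Proof.
apply: lift_rel_fst => s1; rewrite /dist_hat (bigD1 (succ N1 N2 s2 a s1)) //= eqxx.
by rewrite big1 ?addr0 // => x /negbTE ->.
Qed.

Lemma not_standard p a : ~ standard N1 N2 p a ->
  exists2 s2, p.2 = Some s2 & case3 N1 N2 p.1 s2 /\ inB N1 N2 p.1 s2 a.
Proof.
case: p => s1 [s2|] nst; last by case: nst.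
have c3 : case3 N1 N2 s1 s2.
  split; first by move=> h; apply: nst; left.
  by apply: contrapT => h; apply: nst; right; left.
by exists s2 => //; split=> //; apply: contrapT => nB; apply: nst; do 2!right.
Qed.

Lemma used_Must p a phi1 : L N1 p.1 a phi1 = Must -> used N1 N2 p a phi1.
Proof.
move=> H1; have [st|/not_standard [s2 E [c3 iB]]] := EM (standard N1 N2 p a).
  by left.
right; exists s2; split; rewrite ?H1 //.
by case: (inB_Must det1 H1 iB); tauto.
Qed.

Lemma cex_L_Must p a phi1 : L N1 p.1 a phi1 = Must ->
  exists2 nu, cex_L N1 N2 ch p a nu & lift_rel fstR nu (ch p a phi1).
Proof.
move=> H1; have [st|/not_standard [s2 E [c3 iB]]] := EM (standard N1 N2 p a).
  by exists (dist_bot (ch p a phi1)); [left; split=> //; exists phi1 | apply: lift_fst_bot].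
have HnN : L N1 p.1 a phi1 <> No by rewrite H1.
case: (inB_Must det1 H1 iB) => B.
1,2: by exists (dist_bot (ch p a phi1));
  [right; left; exists s2; split; eauto | apply: lift_fst_bot].
all: by exists (dist_hat N1 N2 s2 a (ch p a phi1));
  [do 2!right; exists s2; split; eauto | apply: lift_fst_hat].
Qed.

Lemma cex_L_inv p a nu : cex_L N1 N2 ch p a nu ->
  exists phi1, [/\ L N1 p.1 a phi1 <> No, used N1 N2 p a phi1 &
                   lift_rel fstR nu (ch p a phi1)].
Proof.
case=> [[st [phi1 [H1 ->]]]|[[s2 [E c3 B [phi1 [H1 ->]]]]|[s2 [E c3 B [phi1 [H1 ->]]]]]].
- exists phi1; split; [by rewrite H1 | by left | exact: lift_fst_bot].
- exists phi1; split=> //; last exact: lift_fst_bot.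
  by right; exists s2; split=> //; case: B; tauto.
- exists phi1; split=> //; last exact: lift_fst_hat.
  by right; exists s2; split=> //; case: B; tauto.
Qed.

Lemma cex_satisfies_N1 : init N1 = [set s01] -> satisfies P N1.
Proof.
move=> I1; exists fstR; split; last first.
  by move=> p; rewrite inE => /eqP -> /=; exists s01; rewrite // I1 inE.
move=> p s <-; split.
- by rewrite /= cex_V_spec.
- move=> a phi1 H1; have [nu Hnu lift] := cex_L_Must H1.
  exists nu; split; first by rewrite /= asboolT.
  by move=> mu1 ->; exists (ch p a phi1); split=> //; apply: vch.1; apply: used_Must.
- move=> a nu /=; case: asboolP => // /cex_L_inv [phi1 [H1 used1 lift]] _.
  by exists phi1; split=> // mu1 ->; exists (ch p a phi1); split=> //; apply: vch.1.
Qed.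

Section RefinementIntoN2.
Variable Q : Pst S1 S2 -> S2 -> Prop.
Hypothesis HQ : is_refinement (APA_of_PA P) N2 Q.

Lemma refinement_V p s2 : Q p s2 -> V N2 s2 = V N1 p.1.
Proof.
move=> /HQ [/= /subsetP /(_ (cex_V N1 p)) + _ _]; rewrite inE eqxx => /(_ isT) vin.
by rewrite cex_V_spec; apply/eqP; rewrite eq_sym eqEcard sub1set vin cards1 sv2.
Qed.

Lemma succ_rel_succ s2 e s1' t : succ_rel N1 N2 s2 e s1' t -> succ N1 N2 s2 e s1' = Some t.
Proof.
move=> Ht; rewrite /succ; case: pickP => [t' /asboolP Ht'| /(_ t)]; last by rewrite asboolT.
congr Some; apply: contrapT => neq.
case: Ht => Vt [phi [mu [Lt Satt Pt]]]; case: Ht' => Vt' [phi' [mu' [Lt' Satt' Pt']]].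
case: det2 => _ uniqL disjoint.
have E : phi' = phi by apply: (uniqL s2 e).
subst phi'; apply: (disjoint s2 e phi t' t Lt' neq); last by exists mu', mu.
have /cards1P [v Ev] : #|V N1 s1'| == 1%N by rewrite V1.
by rewrite Vt Vt' setIid Ev; apply/set0Pn; exists v; rewrite inE.
Qed.

Lemma Breaking_cex_transition s1 s2 a :
  Q (s1, Some s2) s2 -> case3 N1 N2 s1 s2 -> Breaking N1 N2 s1 s2 a ->
  exists nu, cex_L N1 N2 ch (s1, Some s2) a nu.
Proof.
move=> /HQ [_ hMust _] c3 Br.
have of_Must phi2 : L N2 s2 a phi2 = Must -> exists nu, cex_L N1 N2 ch (s1, Some s2) a nu.
  by move=> /hMust [nu [/= + _]]; case: asboolP => // Hnu _; exists nu.
have of_N1 phi1 : L N1 s1 a phi1 <> No -> Ba N1 N2 s1 s2 a \/ Bb N1 N2 s1 s2 a ->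
    exists nu, cex_L N1 N2 ch (s1, Some s2) a nu.
  by move=> H1 B; exists (dist_bot (ch (s1, Some s2) a phi1)); right; left; exists s2; split; eauto.
case: Br => [[B|[B|[B|B]]]|[phi1 [phi2 [mu1 [H1 H2 Sat1 nm]]]]].
- by have [[phi1 H1] _] := B; apply: (of_N1 phi1); [rewrite H1 | left].
- by have [[phi1 H1] _] := B; apply: (of_N1 phi1); [rewrite H1 | right].
- by have [[phi2 H2] _] := B; apply: of_Must H2.
- by have [[phi2 H2] _] := B; apply: of_Must H2.
- case E2: (L N2 s2 a phi2) H2 => // _; first exact: of_Must E2.
  exists (dist_hat N1 N2 s2 a (ch (s1, Some s2) a phi1)); do 2!right; exists s2.
  split=> //; last by exists phi1.
  left; exists phi1, phi2; split=> //; exists mu1 => //; exact: no_match_Rk_RR nm.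
Qed.

Section HatCoupling.
Variables (s2 : S2) (a : A) (phi2 : C2) (mu : S1 -> R) (mu2 : S2 -> R).
Hypotheses (L2 : L N2 s2 a phi2 <> No) (Sat2 : Sat N2 phi2 mu2)
  (mu_ge0 : forall s, 0 <= mu s).
Variable d : Pst S1 S2 -> S2 -> R.
Hypotheses (d01 : forall p t, 0 <= d p t <= 1)
  (ddist : forall p, 0 < dist_hat N1 N2 s2 a mu p -> is_dist (d p))
  (dsum : forall t, \sum_p dist_hat N1 N2 s2 a mu p * d p t = mu2 t)
  (dQ : forall p t, 0 < d p t -> Q p t).

Let hat_succ s1' : dist_hat N1 N2 s2 a mu (s1', succ N1 N2 s2 a s1') = mu s1'.
Proof. by rewrite /dist_hat eqxx. Qed.

(* Positive weight from (s1', succ s1') to t puts mass on t in mu2, and Q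
   gives t the valuation of s1': t is an a-successor of s2 of that valuation. *)
Lemma hat_coupling_succ s1' t : 0 < mu s1' ->
  0 < d (s1', succ N1 N2 s2 a s1') t -> succ N1 N2 s2 a s1' = Some t.
Proof.
move=> mp dp; apply: succ_rel_succ; split; first by rewrite (refinement_V (dQ dp)).
exists phi2, mu2; split=> //.
rewrite -dsum (bigD1 (s1', succ N1 N2 s2 a s1')) //= hat_succ.
have : 0 <= \sum_(p | p != (s1', succ N1 N2 s2 a s1')) dist_hat N1 N2 s2 a mu p * d p t.
  apply: sumr_ge0 => p _; apply: mulr_ge0; last by case/andP: (d01 p t).
  by rewrite /dist_hat; case: ifP.
by have := mulr_gt0 mp dp; lra.
Qed.

Lemma hat_coupling_point s1' : 0 < mu s1' ->
  exists2 t, succ N1 N2 s2 a s1' = Some t & forall t', d (s1', Some t) t' = (t' == t)%:R.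
Proof.
move=> mp; have dist_s1' : is_dist (d (s1', succ N1 N2 s2 a s1')) by apply: ddist; rewrite hat_succ.
have [t /(hat_coupling_succ mp) E] := dist_support dist_s1'.
exists t => //; rewrite -E; apply: dist_point => // t' /(hat_coupling_succ mp).
by rewrite E => -[].
Qed.

Lemma hat_coupling_related s1' : 0 < mu s1' ->
  exists2 t, succ N1 N2 s2 a s1' = Some t & Q (s1', Some t) t.
Proof.
move=> /hat_coupling_point [t E point]; exists t => //.
by apply: dQ; rewrite point eqxx ltr01.
Qed.

Lemma hat_coupling_push : push N1 N2 s2 a mu = mu2.
Proof.
apply: funext => t; rewrite /push -dsum.
transitivity (\sum_s1' \sum_x dist_hat N1 N2 s2 a mu (s1', x) * d (s1', x) t); last first.
  by rewrite pair_bigA; apply: eq_bigr => -[].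
rewrite big_mkcond; apply: eq_bigr => s1' _.
rewrite (bigD1 (succ N1 N2 s2 a s1')) //= hat_succ big1 ?addr0; last first.
  by move=> x /negbTE nx; rewrite /dist_hat /= nx mul0r.
have := mu_ge0 s1'; rewrite le_eqVlt => /orP [/eqP <-|/hat_coupling_point [t0 -> ->]].
  by rewrite mul0r; case: ifP.
have -> : (Some t0 == Some t) = (t == t0) by rewrite eq_sym.
by case: (t == t0); rewrite ?mulr1 ?mulr0.
Qed.

End HatCoupling.

Definition case3_unrelated_below n := forall s1 s2,
  (ind_pair N1 N2 s1 s2 < n)%N -> case3 N1 N2 s1 s2 -> ~ Q (s1, Some s2) s2.

Lemma breaking_choice_unmatched s1 s2 a phi2 mu mu2 :
  case3_unrelated_below (ind_pair N1 N2 s1 s2) ->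
  L N2 s2 a phi2 <> No -> (forall s, 0 <= mu s) ->
  breaking_choice N1 N2 s1 s2 a phi2 mu -> Sat N2 phi2 mu2 ->
  ~ lift_rel Q (dist_hat N1 N2 s2 a mu) mu2.
Proof.
move=> below L2 mu_ge0 choice Sat2 [d [d01 [ddist [dsum dQ]]]].
have related := hat_coupling_related L2 Sat2 mu_ge0 d01 ddist dsum dQ.
case: choice => [[s1' [mp nS]]|[npush|[s1' [s2' [mp Es lt]]]]].
- by have [t] := related s1' mp; rewrite nS.
- by apply: npush; rewrite (hat_coupling_push L2 Sat2 mu_ge0 d01 ddist dsum dQ).
- have [t] := related s1' mp; rewrite Es => -[<-] q.
  apply: (below s1' s2' lt) => //; split; last by rewrite (refinement_V q).
  move=> /indpair_Rmax E; move: lt; rewrite /ind_pair E ltnNge.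
  by rewrite geq_minr.
Qed.

Lemma Breaking_no_cex_transition s1 s2 a nu :
  case3_unrelated_below (ind_pair N1 N2 s1 s2) -> case3 N1 N2 s1 s2 ->
  Q (s1, Some s2) s2 -> Breaking N1 N2 s1 s2 a ->
  ~ cex_L N1 N2 ch (s1, Some s2) a nu.
Proof.
move=> below c3 /HQ [_ _ hMay] Br Hnu.
have [phi2 [L2 match2]] := hMay a nu (ltac:(by rewrite /= asboolT)).
case: Hnu => [[st _]|[[s2' [/= [<-] _ B _]]|[s2' [/= [<-] _ B [phi1 [H1 Enu]]]]]].
- case: st => [|[|[_]]]; [exact: c3.1 | exact: (@^~ c3.2) | by apply; apply: Breaking_inB].
- by case: B => -[_ /(_ phi2)].
- have [mu2 [Sat2 lift]] := match2 _ erefl.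
  have Sat1 : Sat N1 phi1 (ch (s1, Some s2) a phi1).
    by apply: vch.1; right; exists s2; split=> //; case: B; tauto.
  have [choice _] := vch.2 s1 s2 a phi1 phi2 c3 B H1 L2.
  apply: (breaking_choice_unmatched below L2 _ (choice Br) Sat2); last by rewrite -Enu.
  by case: (wf1 Sat1).
Qed.

Lemma case3_unrelated s1 s2 : case3 N1 N2 s1 s2 -> ~ Q (s1, Some s2) s2.
Proof.
suff below n : case3_unrelated_below n by apply: (below (ind_pair N1 N2 s1 s2).+1).
elim: n => [//|n IH] s1' s2' lt c3 q.
have [a Br] := case3_Breaking c3.
have [nu Hnu] := Breaking_cex_transition q c3 Br.
apply: (Breaking_no_cex_transition _ c3 q Br Hnu) => t1 t2 lt'.
by apply: IH; apply: leq_trans lt' _; rewrite -ltnS.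
Qed.

End RefinementIntoN2.
End Counterexample.

Theorem theorem5p3 (R : realType) (A AP : finType)
    (S1 S2 : finType) (C1 C2 : Type)
    (N1 : APA R A AP S1 C1) (N2 : APA R A AP S2 C2)
    (s01 : S1) (s02 : S2) (ch : chooser R A S1 S2 C1) :
  APA_wf N1 -> APA_wf N2 ->
  SVNF N1 -> SVNF N2 ->
  deterministic N1 -> deterministic N2 ->
  init N1 = [set s01] -> init N2 = [set s02] ->
  (forall s1, #|V N1 s1| = 1) ->
  ~ refines N1 N2 ->
  valid_chooser N1 N2 ch ->
  satisfies (cexPA N1 N2 s01 s02 ch) N1 /\
  ~ satisfies (cexPA N1 N2 s01 s02 ch) N2.
Proof.
move=> wf1 _ _ sv2 det1 det2 I1 I2 V1 nref vch.
split; first exact: (cex_satisfies_N1 s02 det1 V1 vch I1).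
move=> [Q [HQ init_rel]].
have [s2 /[swap] q] := init_rel (s01, Some s02) (set11 _).
rewrite /= I2 => /set1P E; subst s2.
apply: (case3_unrelated wf1 sv2 det2 V1 vch HQ _ q); split.
  move=> RR0; apply: nref; exists (Rmax N1 N2); split; first exact: Rmax_refinement.
  by move=> s1; rewrite I1 => /set1P ->; exists s02; rewrite ?I2 ?set11.
by rewrite (refinement_V sv2 V1 HQ q).
Qed.
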